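(* Let $\alpha\in(0,1)$, let $A=\alpha/\sum_{k=2}^\infty\frac{1}{k(\log k)^2}$, and set $\alpha_1=0$, $\alpha_k=A/[k(\log k)^2]$ for $k>1$ (so $\sum_k\alpha_k=\alpha$). Let $(Z_k)_{k\in\mathbb N}$ be independent with $Z_k\sim N(\mu_k,1)$, where for $k>1$ all hypotheses are non-null with $\mu_k=(\log k)^{-1/c}$ for some fixed $c>2$, and let $p_k=1-\Phi(Z_k)$. Then the online Bonferroni test, which rejects iff there exists $k\in\mathbb N$ with $p_k\le\alpha_k$, has power one, i.e. $\mathbb P(\exists k\in\mathbb N:\ p_k\le\alpha_k)=1$.
   Context: $\Phi$ is the standard Gaussian CDF. *)

From HB Require Import structures.
From mathcomp Require Import all_boot all_order all_algebra.
From mathcomp Require Import all_classical all_reals all_analysis.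
Set Implicit Arguments. Unset Strict Implicit. Unset Printing Implicit Defensive.
Import Order.TTheory GRing.Theory Num.Theory.
Import numFieldNormedType.Exports.
Local Open Scope classical_set_scope.
Local Open Scope ring_scope.

Definition Phi {R : realType} (x : R) : R :=
  fine (normal_prob 0 1 `]-oo, x]).

Definition mutually_independent d {T : measurableType d} {R : realType}
  (P : probability T R) (X : nat -> {RV P >-> R}) : Prop :=
  forall (J : seq nat) (B : nat -> set R), uniq J ->
    (forall j, j \in J -> measurable (B j)) ->
    P (\bigcap_(j in [set` J]) (X j @^-1` B j)) =
    (\prod_(j <- J) P (X j @^-1` B j))%E.

(* Online Bonferroni levels: alpha_1 = 0, alpha_k = A/(k (log k)^2), k > 1,
   with A = alpha / sum_{k>=2} 1/(k (log k)^2).  (alpha_0 is irrelevant; set to 0.) *)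
Definition bonf_const {R : realType} (alpha : R) : R :=
  alpha / limn (fun n : nat => \sum_(2 <= k < n) (k%:R * (ln (k%:R : R)) ^+ 2)^-1).

Definition bonf_alpha {R : realType} (alpha : R) (k : nat) : R :=
  if (1 < k)%N then bonf_const alpha / (k%:R * (ln (k%:R : R)) ^+ 2) else 0.

Arguments mutually_independent {d T R} P X.

From HB Require Import structures.
From mathcomp Require Import all_boot all_order all_algebra.
From mathcomp Require Import all_classical all_reals all_analysis.
From mathcomp Require Import ring lra measurable_realfun.
Import Order.TTheory GRing.Theory Num.Theory.
Import numFieldNormedType.Exports.
Local Open Scope classical_set_scope.
Local Open Scope ring_scope.

(* Independence bounds the probability of no rejection among the indices
   [K <= k < n] by [prod (1 - P(p_k <= alpha_k)) <= exp (- sum P(p_k <= alpha_k))],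
   so power one follows once [sum_k P(p_k <= alpha_k)] diverges.  With [L = ln k],
   the rejection region contains [[t, +oo[] where [exp(-t^2/2) = alpha_k], so
   [sqrt L <= t <= 2L].  Shifting the mean by [mu_k = L^(-1/c)] multiplies the
   Gaussian tail at [t] by about [exp(t mu_k) >= exp(L^(1/2 - 1/c))], which
   eventually beats every power of [L]; hence [P(p_k <= alpha_k) >= C/k] and the
   sum diverges like the harmonic series. *)
Section gaussian.
Context {R : realType}.

Lemma normal_pdf1E (m x : R) :
  normal_pdf m 1 x = normal_peak 1 * expR (- (x - m) ^+ 2 / 2).
Proof. by rewrite normal_pdfE ?oner_neq0 //= /normal_fun expr1n. Qed.

Lemma normal_peak1_gt0 : 0 < normal_peak 1 :> R.
Proof. by apply: normal_peak_gt0; rewrite oner_neq0. Qed.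

(* On [x > t >= 0] the standard density is at most [exp(-t^2/2)] times the
   density of [N(t,1)], whose mass is at most one. *)
Lemma normal_prob_itvoy_le (t : R) : 0 <= t ->
  (normal_prob 0 1 `]t, +oo[ <= (expR (- t ^+ 2 / 2))%:E)%E.
Proof.
move=> t0.
apply: (@le_trans _ _ (\int[lebesgue_measure]_(x in `]t, +oo[)
   (expR (- t ^+ 2 / 2) * normal_pdf t 1 x)%:E)%E).
  apply: ge0_le_integral => //.
  - by move=> x _; rewrite lee_fin normal_pdf_ge0.
  - apply: measurable_funTS; apply/measurable_EFinP.
    exact: measurable_normal_pdf.
  - apply: measurable_funTS; apply/measurable_EFinP.
    by apply: measurable_funM => //; exact: measurable_normal_pdf.
  - move=> x; rewrite /= in_itv /= andbT => tx.
    rewrite lee_fin !normal_pdf1E mulrCA ler_pM2l ?normal_peak1_gt0 //.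
    rewrite -expRD ler_expR subr0.
    have : 0 <= t * (x - t) by apply: mulr_ge0 => //; lra.
    nra.
under eq_integral do rewrite EFinM.
rewrite ge0_integralZl //; last 2 first.
- by apply: measurable_funTS; apply/measurable_EFinP; exact: measurable_normal_pdf.
- by move=> x _; rewrite lee_fin normal_pdf_ge0.
rewrite -[leRHS]mule1 lee_wpmul2l ?lee_fin ?expR_ge0 //.
exact: (probability_le1 (normal_prob t 1)).
Qed.

Lemma Phi_nondecreasing : {homo (@Phi R) : x y / x <= y}.
Proof.
move=> x y xy; apply: fine_le; rewrite ?fin_num_measure //.
apply: le_measure; rewrite ?inE //.
by move=> z /=; rewrite !in_itv /= => zx; exact: le_trans zx xy.
Qed.

Lemma onem_Phi_le (t : R) : 0 <= t -> 1 - Phi t <= expR (- t ^+ 2 / 2).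
Proof.
move=> t0.
have tail_fin := fin_num_measure (normal_prob 0 1) _ (measurable_itv `]t, +oo[).
rewrite /Phi -setCitvr probability_setC // fineB //=.
by have := normal_prob_itvoy_le _ t0; rewrite -(fineK tail_fin) lee_fin => ?; lra.
Qed.

Lemma measurable_onem_Phi_le (a : R) : measurable [set x : R | 1 - Phi x <= a].
Proof.
have -> : [set x : R | 1 - Phi x <= a] = Phi @^-1` `[1 - a, +oo[.
  by apply/seteqP; split => x /=; rewrite in_itv /= andbT => ?; lra.
rewrite -[X in measurable X]setTI.
exact: (nondecreasing_measurable measurableT Phi_nondecreasing).
Qed.

Lemma itvcy_sub_onem_Phi_le (t a : R) : 0 <= t -> expR (- t ^+ 2 / 2) <= a ->
  `[t, +oo[ `<=` [set x | 1 - Phi x <= a].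
Proof.
move=> t0 ta x /=; rewrite in_itv /= andbT => tx.
by have := onem_Phi_le _ t0; have := Phi_nondecreasing _ _ tx; lra.
Qed.

Lemma normal_prob_itvcy_ge (m t d : R) : m <= t -> 0 < d ->
  ((d * normal_pdf m 1 (t + d))%:E <= normal_prob m 1 `[t, +oo[)%E.
Proof.
move=> mt d0.
apply: (@le_trans _ _ (normal_prob m 1 `[t, t + d])); last first.
  apply: le_measure; rewrite ?inE //.
  by move=> z /=; rewrite !in_itv /= => /andP[-> _].
have <- : (\int[lebesgue_measure]_(x in `[t, (t + d)%R])
    cst (normal_pdf m 1 (t + d))%:E x = (d * normal_pdf m 1 (t + d))%:E)%E.
  rewrite integral_cst //= lebesgue_measure_itv /= lte_fin ltrDl d0 -EFinB -EFinM.
  by congr EFin; ring.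
apply: ge0_le_integral => //.
- by move=> x _; rewrite lee_fin normal_pdf_ge0.
- apply: measurable_funTS; apply/measurable_EFinP.
  exact: measurable_normal_pdf.
- move=> x; rewrite /= in_itv /= => /andP[tx xt].
  rewrite lee_fin !normal_pdf1E ler_pM2l ?normal_peak1_gt0 //.
  rewrite ler_expR !mulNr lerN2 ler_pM2r ?invr_gt0 //.
  have : 0 <= x - m by lra.
  have : x - m <= t + d - m by lra.
  nra.
Qed.

(* Rectangle of width [1/t] under the density at [t + 1/t]: a Mills-ratio type
   lower bound for the tail of [N(m,1)]. *)
Lemma normal_prob_itvcy_ge_expR (m t : R) : 1 <= t -> 0 <= m <= 1 ->
  ((t^-1 * normal_peak 1 * expR (-2) * expR (t * m - t ^+ 2 / 2))%:E
    <= normal_prob m 1 `[t, +oo[)%E.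
Proof.
move=> t1 /andP[m0 m1].
have t0 : 0 < t^-1 by rewrite invr_gt0; lra.
have mt : m <= t by lra.
apply: le_trans (normal_prob_itvcy_ge _ _ _ mt t0).
rewrite lee_fin -!mulrA ler_pM2l // normal_pdf1E ler_pM2l ?normal_peak1_gt0 //.
rewrite -expRD ler_expR.
have tt : t * t^-1 = 1 by rewrite mulfV //; apply: lt0r_neq0; lra.
have t10 : t^-1 <= 1 by rewrite invf_le1; lra.
have : (t^-1 - m) ^+ 2 <= 1 by nra.
nra.
Qed.

End gaussian.

Section bonferroni_levels.
Context {R : realType}.

Lemma inv_mul_ln_sqr_le (x : R) : 2 <= x ->
  ((x + 1) * ln (x + 1) ^+ 2)^-1 <= (ln x)^-1 - (ln (x + 1))^-1.
Proof.
move=> x2.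
have lnx_gt0 : 0 < ln x by apply: ln_gt0; lra.
have ln_le : ln x <= ln (x + 1) by rewrite ler_ln ?posrE //; lra.
have ln_diff : (x + 1)^-1 <= ln (x + 1) - ln x.
  suff : ln x - ln (x + 1) <= - (x + 1)^-1 by lra.
  rewrite -ln_div ?posrE //; try lra.
  have -> : x / (x + 1) = 1 + - (x + 1)^-1 by field; lra.
  by apply: le_ln1Dx; rewrite ltrN2 invf_lt1 //; lra.
have y_gt0 : 0 < x + 1 by lra.
move: ln_diff lnx_gt0 ln_le y_gt0.
move: (x + 1) (ln (x + 1)) (ln x) => y b a ln_diff a_gt0 ab y_gt0.
have b_gt0 : 0 < b by lra.
have ba_y : 1 <= (b - a) * y.
  by have := ler_wpM2r (ltW y_gt0) ln_diff; rewrite mulVf ?gt_eqF.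
have -> : a^-1 - b^-1 = (b - a) / (a * b) by field; rewrite !gt_eqF //; lra.
rewrite ler_pdivlMr ?mulr_gt0 // mulrC ler_pdivrMr ?mulr_gt0 ?exprn_gt0 //.
have : 0 <= ((b - a) * y - 1) * b ^+ 2 by apply: mulr_ge0; [lra | exact: sqr_ge0].
have : 0 <= (b - a) * b by apply: mulr_ge0; lra.
nra.
Qed.

(* Telescoping against [1 / ln k] from [k = 3] on. *)
Lemma sum_inv_mul_ln_sqr_le (n : nat) :
  \sum_(2 <= k < n) ((k%:R : R) * ln k%:R ^+ 2)^-1
    <= (2 * ln 2 ^+ 2)^-1 + (ln 2)^-1.
Proof.
pose g := fun k : nat => (ln (k%:R : R))^-1.
have g_ge0 k : (0 < k)%N -> 0 <= g k by move=> k0; rewrite invr_ge0 ln_ge0 // ler1n.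
have F2_ge0 : 0 <= (2 * ln 2 ^+ 2 : R)^-1 by rewrite invr_ge0 mulr_ge0 // sqr_ge0.
have g2_ge0 : 0 <= (ln 2 : R)^-1 by exact: (g_ge0 2%N).
case: n => [|n]; first by rewrite big_geq //; lra.
case: (leqP n 1) => [n1|n1]; first by rewrite big_geq //; lra.
rewrite big_ltn // big_add1 /= lerD2l.
apply: (@le_trans _ _ (\sum_(2 <= k < n) (g k - g k.+1))).
  apply: ler_sum_nat => k /andP[k2 _].
  have k2' : (2 : R) <= k%:R by rewrite (ler_nat R 2 k).
  by rewrite /g -natr1; exact: inv_mul_ln_sqr_le.
rewrite (@telescope_sumr_eq _ _ _ (fun k => - g k)) => [|//|k _]; last by rewrite opprK addrC.
by have := g_ge0 n (ltnW n1); rewrite /g; lra.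
Qed.

(* [limn] of a divergent sequence is a junk value, hence the convergence proof. *)
Lemma bonf_const_gt0 (alpha : R) : 0 < alpha -> 0 < bonf_const alpha.
Proof.
move=> alpha0; apply: divr_gt0 => //.
set u := fun n : nat => \sum_(2 <= k < n) ((k%:R : R) * ln k%:R ^+ 2)^-1.
have u_nd : nondecreasing_seq u.
  by apply: nondecreasing_series => k _ _; rewrite invr_ge0 mulr_ge0 // sqr_ge0.
have u_cvg : cvgn u.
  apply: nondecreasing_is_cvgn => //.
  by exists ((2 * ln 2 ^+ 2)^-1 + (ln 2)^-1) => _ [n _ <-]; exact: sum_inv_mul_ln_sqr_le.
apply: lt_le_trans (nondecreasing_cvgn_le u_nd u_cvg 3).
by rewrite /u big_nat1 invr_gt0 mulr_gt0 // exprn_gt0 // ln_gt0 // ltr1n.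
Qed.

Lemma near_ln_le_powR (a b : R) : 0 < b ->
  \forall x \near +oo, a * ln x <= x `^ b.
Proof.
move=> b0; near=> x.
have x1 : 1 <= x by near: x; apply: nbhs_pinfty_ge; rewrite num_real.
have xM : (2 * `|a| / b) `^ (2 / b) <= x.
  by near: x; apply: nbhs_pinfty_ge; rewrite num_real.
have lnx0 : 0 <= ln x by rewrite ln_ge0.
set M := 2 * `|a| / b.
have M0 : 0 <= M by rewrite divr_ge0 ?mulr_ge0 // ltW.
set u := x `^ (b / 2).
have u0 : 0 < u by apply: powR_gt0; lra.
have Mu : M <= u.
  have -> : M = (M `^ (2 / b)) `^ (b / 2).
    by rewrite -powRrM (_ : 2 / b * (b / 2) = 1) ?powRr1 //; field; rewrite gt_eqF.
  by apply: ge0_ler_powR; rewrite ?nnegrE ?powR_ge0 ?divr_ge0 // ?ltW //; lra.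
have -> : x `^ b = u * u.
  rewrite /u -powRD; last by apply/implyP => _; rewrite gt_eqF //; lra.
  by congr (_ `^ _); field.
have lnu : ln u <= u := ltW (ln_sublinear u0).
have Mlnu : `|a| * ln x = M * ln u.
  by rewrite /M /u ln_powR; field; rewrite gt_eqF.
apply: (@le_trans _ _ (`|a| * ln x)); first by rewrite ler_wpM2r // ler_norm.
rewrite Mlnu (@le_trans _ _ (M * u)) ?ler_wpM2l // ler_wpM2r //; lra.
Unshelve. all: by end_near. Qed.

Lemma ln_level_bounds (A L : R) :
  0 < A -> 1 <= L -> A <= L -> 1 - ln A <= L ->
  2 * L <= - 2 * ln (A / (expR L * L ^+ 2)) <= 4 * L ^+ 2.
Proof.
move=> A0 L1 AL lnAL.
have L0 : 0 < L by lra.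
have L2_gt0 : 0 < L ^+ 2 by rewrite exprn_gt0.
rewrite ln_div ?posrE ?mulr_gt0 ?expR_gt0 // lnM ?posrE ?expR_gt0 // expRK.
have lnAL2 : ln A <= ln (L ^+ 2) by rewrite ler_ln ?posrE //; nra.
have lnL2 : ln (L ^+ 2) <= L ^+ 2 - 1.
  by rewrite -[X in ln X](subrK 1) addrC le_ln1Dx //; nra.
apply/andP; split; nra.
Qed.

Lemma exists_gauss_level (A L : R) :
  0 < A -> 1 <= L -> A <= L -> 1 - ln A <= L ->
  exists t, [/\ 1 <= t, Num.sqrt L <= t, t <= 2 * L &
                expR (- t ^+ 2 / 2) = A / (expR L * L ^+ 2)].
Proof.
move=> A0 L1 AL lnAL.
have a0 : 0 < A / (expR L * L ^+ 2).
  by rewrite divr_gt0 // mulr_gt0 ?expR_gt0 // exprn_gt0 //; lra.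
have /andP[t2L t4L] := ln_level_bounds _ _ A0 L1 AL lnAL.
move: a0 t2L t4L; set a := A / _ => a0 t2L t4L.
set t := Num.sqrt (- 2 * ln a).
have t0 : 0 <= t := sqrtr_ge0 _.
have tt : t ^+ 2 = - 2 * ln a by rewrite sqr_sqrtr //; lra.
exists t; split.
- by rewrite -[leLHS]sqrtr1 ler_sqrt; lra.
- by rewrite ler_sqrt; lra.
- rewrite -ler_sqr ?nnegrE // ?tt; last lra.
  by rewrite (_ : (2 * L) ^+ 2 = 4 * L ^+ 2) //; ring.
- by rewrite tt (_ : - (- 2 * ln a) / 2 = ln a) ?lnK //; field.
Qed.

(* The mean shift gains a factor [exp(t mu) >= L^3], which beats [1/t >= 1/(2L)]
   and the [1/L^2] in the level, leaving a tail probability of order [exp(-L)]. *)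
Lemma near_normal_prob_onem_Phi_ge (A c : R) : 0 < A -> 2 < c ->
  \forall L \near +oo,
    ((normal_peak 1 * expR (-2) * A / 2 / expR L)%:E <=
      normal_prob (L `^ (- c^-1)) 1
        [set x | (1 - Phi x <= A / (expR L * L ^+ 2))%R])%E.
Proof.
move=> A0 c2.
have b0 : 0 < 2^-1 - c^-1 by rewrite subr_gt0 ltf_pV2 ?posrE //; lra.
near=> L.
have L1 : 1 <= L by near: L; apply: nbhs_pinfty_ge; rewrite num_real.
have AL : A <= L by near: L; apply: nbhs_pinfty_ge; rewrite num_real.
have lnAL : 1 - ln A <= L by near: L; apply: nbhs_pinfty_ge; rewrite num_real.
have lnL : 3 * ln L <= L `^ (2^-1 - c^-1) by near: L; exact: near_ln_le_powR.
have L0 : 0 < L by lra.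
have [t [t1 Lt tL ta]] := exists_gauss_level _ _ A0 L1 AL lnAL.
set a := A / (expR L * L ^+ 2) in ta *.
set mu := L `^ (- c^-1).
have mu01 : 0 <= mu <= 1.
  rewrite powR_ge0 /mu powRN invf_le1 ?powR_gt0 //.
  by rewrite -[leLHS](powRr0 L) ler_powR // invr_ge0 ltW //; lra.
have tmu : L ^+ 3 <= expR (t * mu).
  rewrite -[leLHS]lnK ?posrE ?exprn_gt0 // ler_expR lnXn // -mulr_natl.
  apply: (le_trans lnL); rewrite /mu powRD; last by rewrite gt_eqF ?implybT.
  by rewrite ler_wpM2r ?powR_ge0 // powR12_sqrt //; lra.
have sub : `[t, +oo[ `<=` [set x | 1 - Phi x <= a].
  by apply: itvcy_sub_onem_Phi_le; rewrite ?ta //; lra.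
apply: (@le_trans _ _ (normal_prob mu 1 `[t, +oo[)); last first.
  by apply: le_measure; rewrite ?inE //; exact: measurable_onem_Phi_le.
apply: le_trans (normal_prob_itvcy_ge_expR _ _ t1 mu01); rewrite lee_fin.
rewrite (_ : t * mu - t ^+ 2 / 2 = t * mu + - t ^+ 2 / 2); last by ring.
rewrite expRD ta.
have a0 : 0 < a by rewrite divr_gt0 // mulr_gt0 ?expR_gt0 // exprn_gt0.
have Pea0 : 0 < normal_peak 1 * expR (-2) * a.
  by apply: mulr_gt0 => //; apply: mulr_gt0; [exact: normal_peak1_gt0 | exact: expR_gt0].
have -> : normal_peak 1 * expR (-2) * A / 2 / expR L
    = normal_peak 1 * expR (-2) * a * ((2 * L)^-1 * L ^+ 3).
  by rewrite /a; field; rewrite !gt_eqF ?expR_gt0.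
have -> : t^-1 * normal_peak 1 * expR (-2) * (expR (t * mu) * a)
    = normal_peak 1 * expR (-2) * a * (t^-1 * expR (t * mu)) by ring.
rewrite ler_pM2l //; apply: ler_pM => //.
- by rewrite invr_ge0 mulr_ge0 // ltW.
- by rewrite exprn_ge0 // ltW.
- by rewrite lef_pV2 ?posrE //; lra.
Unshelve. all: by end_near. Qed.

Lemma sum_invr_nat_unbounded (K : nat) (M : R) : (0 < K)%N ->
  exists n, M <= \sum_(K <= j < n) (j%:R)^-1.
Proof.
move=> K0.
have harmonic_nd : nondecreasing_seq (series (@harmonic R)).
  by apply: nondecreasing_series => n _ _; exact: harmonic_ge0.
have /cvgryPge/(_ (K%:R * M)) [m _ hm] :=
  nondecreasing_dvgn_lt harmonic_nd (@dvg_harmonic R).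
exists (K + m)%N.
have K0' : (0 : R) < K%:R by rewrite ltr0n.
rewrite -(ler_pM2l K0') (le_trans (hm m (leqnn m))) //.
rewrite -[in X in _ <= _ * X](add0n K) big_addn add0n addKn big_mkord.
rewrite seriesEord /= mulr_sumr; apply: ler_sum => i _.
rewrite ler_pdivlMr ?ltr0n ?addn_gt0 ?K0 ?orbT // mulrC ler_pdivrMr ?ltr0Sn //.
by rewrite -natrM ler_nat mulnS addnC leq_add2l leq_pmull.
Qed.

Lemma near_ln_natr (Q : R -> Prop) :
  (\forall L \near +oo, Q L) -> \forall k \near \oo, Q (ln k%:R).
Proof.
case=> M [_ HM]; near=> k; apply: HM.
have Mk : expR M + 1 <= k%:R by near: k; exact: nbhs_infty_ger.
rewrite -ltr_expR lnK ?posrE; last by apply: lt_le_trans Mk; rewrite ltr_pwDr ?expR_gt0.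
by apply: lt_le_trans Mk; rewrite ltrDl.
Unshelve. all: by end_near. Qed.

Lemma near_normal_prob_bonf_ge (alpha c : R) : 0 < alpha -> 2 < c ->
  \forall k \near \oo,
    ((normal_peak 1 * expR (-2) * bonf_const alpha / 2 / k%:R)%:E <=
      normal_prob (ln (k%:R : R) `^ (- c^-1)) 1
        [set x | (1 - Phi x <= bonf_alpha alpha k)%R])%E.
Proof.
move=> alpha0 c2.
have := near_ln_natr _ (near_normal_prob_onem_Phi_ge _ _ (bonf_const_gt0 _ alpha0) c2).
apply: filterS2 (nbhs_infty_ge 2) => k k2.
by rewrite /bonf_alpha k2 lnK // posrE ltr0n ltnW.
Qed.

End bonferroni_levels.

Section independence.
Context {d} {T : measurableType d} {R : realType} (P : probability T R).

Lemma prod_probability_setC_le (E : nat -> set T) (q : nat -> R) (s : seq nat) :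
  (forall j, j \in s -> measurable (E j) /\ ((q j)%:E <= P (E j))%E) ->
  (\prod_(j <- s) P (~` E j) <= (expR (- \sum_(j <- s) q j))%:E)%E.
Proof.
move=> hE.
have -> : (\prod_(j <- s) P (~` E j) = (\prod_(j <- s) fine (P (~` E j)))%:E)%E.
  rewrite -prodEFin big_seq [RHS]big_seq; apply: eq_bigr => j /hE[mE _].
  by rewrite fineK // fin_num_measure //; exact: measurableC.
rewrite lee_fin -sumrN expR_sum big_seq [leRHS]big_seq.
apply: ler_prod => j /hE[mE qE]; rewrite fine_ge0 ?measure_ge0 //=.
have qPE : q j <= fine (P (E j)) by rewrite -lee_fin fineK ?fin_num_measure.
rewrite probability_setC // fineB ?fin_num_measure //=.
by have := expR_ge1Dx (- q j); lra.
Qed.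

(* An "at least one hit" form of the second Borel-Cantelli lemma. *)
Lemma mutually_independent_hit (X : nat -> {RV P >-> R}) (B : nat -> set R)
    (q : nat -> R) (K : nat) :
  mutually_independent P X -> (forall j, measurable (B j)) ->
  (forall j, (K <= j)%N -> ((q j)%:E <= P (X j @^-1` B j))%E) ->
  (forall M, exists n, M <= \sum_(K <= j < n) q j) ->
  P (\bigcup_(j in [set j | (K <= j)%N]) X j @^-1` B j) = 1%E.
Proof.
move=> indep mB qP q_unbounded.
have mXB j : measurable (X j @^-1` B j) := measurable_funPTI _ (mB j).
set U := \bigcup_(j in _) _.
have mU : measurable U by apply: bigcup_measurable => j _.
have mUC : measurable (~` U) := measurableC mU.
rewrite -(setCK U) probability_setC //.
suff -> : P (~` U) = 0%E by rewrite sube0.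
apply/eqP; rewrite eq_le measure_ge0 andbT; apply/lee_addgt0Pr => e e0.
rewrite add0e; have [n qn] := q_unbounded (- ln e).
have sub : ~` U `<=` \bigcap_(j in [set` index_iota K n]) X j @^-1` ~` B j.
  move=> w nUw j /=; rewrite mem_index_iota => /andP[Kj _] hit.
  by apply: nUw; exists j.
have mcap : measurable (\bigcap_(j in [set` index_iota K n]) X j @^-1` ~` B j).
  by apply: bigcap_measurableType => j _; apply: measurable_funPTI; exact: measurableC.
apply: (le_trans (le_measure _ _ _ sub)); rewrite ?inE //.
have := indep (index_iota K n) (fun j => ~` B j) (iota_uniq _ _).
move=> /(_ (fun j _ => measurableC (mB j))) /= ->.
under eq_bigr do rewrite -preimage_setC.
apply: (@le_trans _ _ (expR (- \sum_(K <= j < n) q j))%:E).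
  apply: (prod_probability_setC_le (fun j => X j @^-1` B j)).
  by move=> j; rewrite mem_index_iota => /andP[Kj _]; split; [exact: mXB | exact: qP].
by rewrite lee_fin -[leRHS]lnK ?posrE // ler_expR; lra.
Qed.

End independence.

Theorem lemma4 (R : realType) (d : measure_display) (T : measurableType d)
  (P : probability T R) (alpha c : R) (mu : nat -> R)
  (Z : nat -> {RV P >-> R}) :
  0 < alpha < 1 ->
  2 < c ->
  (forall k : nat, (1 < k)%N -> mu k = powR (ln (k%:R : R)) (- c^-1)) ->
  (forall (k : nat) (A : set R), measurable A ->
     distribution P (Z k) A = normal_prob (mu k) 1 A) ->
  mutually_independent P Z ->
  P [set w | exists k : nat, (1 <= k)%N /\
                1 - Phi (Z k w) <= bonf_alpha alpha k] = 1%E.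
Proof.
move=> /andP[alpha0 _] c2 mu_ln Z_normal Z_indep.
set C := normal_peak 1 * expR (-2) * bonf_const alpha / 2.
pose B k := [set x : R | 1 - Phi x <= bonf_alpha alpha k].
have mB k : measurable (B k) := measurable_onem_Phi_le _.
have [K _ hitK] : \forall k \near \oo, ((C / k%:R)%:E <= P (Z k @^-1` B k))%E.
  near=> k; have k2 : (2 <= k)%N by near: k; exact: nbhs_infty_ge.
  rewrite -[P _]/(distribution P (Z k) (B k)) Z_normal // mu_ln //.
  by near: k; exact: near_normal_prob_bonf_ge.
have C0 : 0 < C.
  apply: divr_gt0 => //; apply: mulr_gt0; last exact: bonf_const_gt0.
  by apply: mulr_gt0; [exact: normal_peak1_gt0 | exact: expR_gt0].
have q_unbounded M : exists n, M <= \sum_(K.+1 <= j < n) C / j%:R.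
  have [n hn] := sum_invr_nat_unbounded K.+1 (M / C) isT.
  by exists n; rewrite -mulr_sumr -ler_pdivrMl // mulrC.
have := mutually_independent_hit P Z B (fun j => C / j%:R) K.+1 Z_indep mB.
move=> /(_ (fun j Kj => hitK j (ltnW Kj)) q_unbounded) hit.
have mZB k : measurable (Z k @^-1` B k) := measurable_funPTI _ (mB k).
have -> : [set w | exists k, (1 <= k)%N /\ 1 - Phi (Z k w) <= bonf_alpha alpha k]
    = \bigcup_(k in [set k | (1 <= k)%N]) Z k @^-1` B k.
  by apply/seteqP; split=> [w [k [k1 hk]]|w [k k1 hk]]; exists k.
apply/eqP; rewrite eq_le probability_le1 /=; last exact: bigcup_measurable.
rewrite -hit le_measure ?inE //; try exact: bigcup_measurable.
by move=> w [k Kk hk]; exists k => //; exact: leq_trans Kk.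
Unshelve. all: by end_near. Qed.
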